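(* Let $A\in\mathbb{R}^{n\times n}$, $C\in\mathbb{R}^{m\times n}$, and consider the system $x^+=Ax$, $y=Cx$ on $\mathcal{X}=\mathbb{R}^n$, $\mathcal{Y}=\mathbb{R}^m$. Let $S_0:=\mathcal{N}(C)$ and $S_k:=AS_{k-1}\cap S_0$ for $k\ge1$. Then for every $k\in\{0,1,2,\ldots\}$ and every $x\in\mathbb{R}^n$, $$[x]_k=\begin{cases} x+S_k & \text{if } x\in\mathcal{R}(A^k),\\ \emptyset & \text{if } x\notin\mathcal{R}(A^k),\end{cases}$$ where $\mathcal{R}(A^k)$ is the range of $A^k$.
   Context: For a system $x^+=f(x)$, $y=h(x)$ with $f:\mathcal{X}\to\mathcal{X}$, $h:\mathcal{X}\to\mathcal{Y}$, inverse images are taken in the set-valued sense: $f^{-1}(x):=\{\eta\in\mathcal{X}: f(\eta)=x\}$ (possibly empty), $h^{-1}(y):=\{\eta: h(\eta)=y\}$, and images of sets are $f(S)=\{f(s):s\in S\}$; for a set $S$ of points, $[S]_k:=\bigcup_{s\in S}[s]_k$. Define $[x]_0:=h^{-1}(h(x))$, and for $k\ge0$: $[x]_k^+:=f([f^{-1}(x)]_k)$ and $[x]_{k+1}:=[x]_k^+\cap[x]_0$. Here $f(x)=Ax$, $h(x)=Cx$. *)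

From HB Require Import structures.
From mathcomp Require Import all_boot all_order all_algebra.
Set Implicit Arguments. Unset Strict Implicit. Unset Printing Implicit Defensive.
Import Order.TTheory GRing.Theory Num.Theory.
Local Open Scope ring_scope.

Section Classes.
Variables (X Y : Type) (f : X -> X) (h : X -> Y).

(* [x]_0 = h^{-1}(h x);
   [x]_{k+1} = f([f^{-1}(x)]_k) ∩ [x]_0, where
   f([f^{-1}(x)]_k) = { f xi | exists s, f s = x /\ xi \in [s]_k }. *)
Fixpoint obs_class (k : nat) (x : X) : X -> Prop :=
  match k with
  | 0 => fun eta => h eta = h x
  | k'.+1 => fun eta =>
      (exists s xi, f s = x /\ obs_class k' s xi /\ eta = f xi) /\ h eta = h x
  end.
End Classes.

Fixpoint Sseq (R : fieldType) (m n : nat) (A : 'M[R]_n) (C : 'M[R]_(m, n))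
    (k : nat) : 'cV[R]_n -> Prop :=
  match k with
  | 0 => fun v => C *m v = 0
  | k'.+1 => fun v => (exists s, Sseq A C k' s /\ v = A *m s) /\ C *m v = 0
  end.

Definition in_range (R : fieldType) (n : nat) (M : 'M[R]_n) (x : 'cV[R]_n) : Prop :=
  exists z : 'cV[R]_n, x = M *m z.

From HB Require Import structures.
From mathcomp Require Import all_boot all_order all_algebra.
Import Order.TTheory GRing.Theory Num.Theory.
Local Open Scope ring_scope.

(* For a linear system, [eta] is indistinguishable from [x] in the last k+1
   outputs exactly when [x] has k linear predecessors and [eta - x] lies in
   [S_k]: by induction on k, a predecessor [s] of [x] contributes [s + t] with
   [t] in [S_k], whose image [x + A t] shares the output of [x] iff [A t] is
   unobservable, i.e. iff [A t] lies in [S_(k+1)]. *)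

Section LinearObservationClasses.

Variables (R : fieldType) (m n : nat) (A : 'M[R]_n) (C : 'M[R]_(m, n)).

Local Notation cls := (obs_class (fun v => A *m v) (fun v => C *m v)).

Lemma in_range_exprS k x :
  in_range (A ^+ k.+1) x <-> exists2 z, in_range (A ^+ k) z & x = A *m z.
Proof.
have mulmx_exprS z : A ^+ k.+1 *m z = A *m (A ^+ k *m z).
  by rewrite exprS -mulmxE mulmxA.
split=> [[z ->] | [_ [z ->] ->]]; last by exists z; rewrite mulmx_exprS.
by exists (A ^+ k *m z); [exists z | rewrite mulmx_exprS].
Qed.

Lemma obs_classE k x eta :
  cls k x eta <-> in_range (A ^+ k) x /\ exists2 s, Sseq A C k s & eta = x + s.
Proof.
elim: k x eta => [|k IH] x eta /=.
  split=> [HC | [_ [s Hs ->]]]; last by rewrite mulmxDr Hs addr0.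
  split; first by exists x; rewrite expr0 mul1mx.
  by exists (eta - x); [rewrite mulmxBr HC subrr | rewrite addrC subrK].
split=> [[[s [xi [<- [/IH [Hs [t Ht ->]] ->]]]] HC] | ].
  split; first by apply/in_range_exprS; exists s.
  exists (A *m t); last by rewrite mulmxDr.
  split; first by exists t.
  by apply/eqP; move/eqP: HC; rewrite !mulmxDr -subr_eq0 addrC addKr.
move=> [/in_range_exprS [s Hs ->] [_ [[t [Ht ->]] HCt] ->]].
split; last by rewrite mulmxDr HCt addr0.
exists s, (s + t); split=> //; split; last by rewrite mulmxDr.
by apply/IH; split=> //; exists t.
Qed.

End LinearObservationClasses.

Theorem mainTheorem2 (R : realFieldType) (m n : nat)
    (A : 'M[R]_n) (C : 'M[R]_(m, n)) :
  forall (k : nat) (x : 'cV[R]_n),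
    (in_range (A ^+ k) x ->
       forall eta : 'cV[R]_n,
         obs_class (fun v => A *m v) (fun v => C *m v) k x eta <->
         (exists s, Sseq A C k s /\ eta = x + s)) /\
    (~ in_range (A ^+ k) x ->
       forall eta : 'cV[R]_n,
         ~ obs_class (fun v => A *m v) (fun v => C *m v) k x eta).
Proof.
move=> k x; split=> [Hx eta | Hx eta /obs_classE [//]].
split=> [/obs_classE [_ [s Hs ->]] | [s [Hs ->]]]; first by exists s.
by apply/obs_classE; split=> //; exists s.
Qed.
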